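(* Let $X$ be a separable Hilbert space, $N\ge0$ an integer, and $F\subset H^2(\mathbb{D},X)$ a closed subspace. The following are equivalent: (i) there is an $X$-valued polynomial $p$ of degree $N$ with $F=E_p$; (ii) $\dim F=N+1$ and $F=H^2(\mathbb{D},X)\ominus\Theta H^2(\mathbb{D},X)$, where $$\Theta(z)=(P_{N+1}^\perp+zP_{N+1})(P_N^\perp+zP_N)\cdots(P_1^\perp+zP_1)$$ for some orthogonal projections $P_1,\dots,P_{N+1}$ on $X$ (with $P^\perp=I-P$), and $\dim\operatorname{Ker}\Theta(0)^*=1$.
   Context: $H^2(\mathbb{D},X)$: $X$-valued power series with square-summable coefficient norms; $S^*$ the backward shift; $E_p$ the closed linear span of $\{S^{*n}p:n\ge0\}$. $\Theta H^2(\mathbb{D},X)=\{\Theta g: g\in H^2(\mathbb{D},X)\}$, with $\Theta$ acting pointwise as an operator-valued function. *)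

From Stdlib Require Import Reals Lra.
Open Scope R_scope.
Set Implicit Arguments.

Record C := mkC { Re : R; Im : R }.
Definition C0 : C := mkC 0 0.
Definition C1 : C := mkC 1 0.
Definition Cadd (a b : C) : C := mkC (Re a + Re b) (Im a + Im b).
Definition Cmul (a b : C) : C :=
  mkC (Re a * Re b - Im a * Im b) (Re a * Im b + Im a * Re b).
Definition Cconj (a : C) : C := mkC (Re a) (- Im a).

Record Hilbert := {
  carrier :> Type;
  vzero : carrier;
  vadd : carrier -> carrier -> carrier;
  vopp : carrier -> carrier;
  vscal : C -> carrier -> carrier;
  inner : carrier -> carrier -> C;
  vadd_assoc : forall x y z, vadd x (vadd y z) = vadd (vadd x y) z;
  vadd_comm : forall x y, vadd x y = vadd y x;
  vadd_0 : forall x, vadd x vzero = x;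
  vadd_opp : forall x, vadd x (vopp x) = vzero;
  vscal_1 : forall x, vscal C1 x = x;
  vscal_assoc : forall a b x, vscal a (vscal b x) = vscal (Cmul a b) x;
  vscal_distr_v : forall a x y, vscal a (vadd x y) = vadd (vscal a x) (vscal a y);
  vscal_distr_c : forall a b x, vscal (Cadd a b) x = vadd (vscal a x) (vscal b x);
  inner_add_l : forall x y z, inner (vadd x y) z = Cadd (inner x z) (inner y z);
  inner_scal_l : forall a x y, inner (vscal a x) y = Cmul a (inner x y);
  inner_conj : forall x y, inner y x = Cconj (inner x y);
  inner_pos : forall x, 0 <= Re (inner x x);
  inner_def : forall x, inner x x = C0 -> x = vzero;
  complete : forall u : nat -> carrier,
    (forall eps, eps > 0 -> exists N, forall m n, (N <= m)%nat -> (N <= n)%nat ->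
        sqrt (Re (inner (vadd (u m) (vopp (u n))) (vadd (u m) (vopp (u n))))) < eps) ->
    exists l, forall eps, eps > 0 -> exists N, forall n, (N <= n)%nat ->
        sqrt (Re (inner (vadd (u n) (vopp l)) (vadd (u n) (vopp l)))) < eps
}.

Section H.
Variable X : Hilbert.

Definition vsub (x y : X) : X := @vadd X x (@vopp X y).
Definition norm2 (x : X) : R := Re (@inner X x x).
Definition vnorm (x : X) : R := sqrt (norm2 x).

Definition separable : Prop :=
  exists d : nat -> X, forall x eps, eps > 0 -> exists n, vnorm (vsub x (d n)) < eps.

Fixpoint vsum (n : nat) (v : nat -> X) : X :=
  match n with O => @vzero X | S n' => @vadd X (vsum n' v) (v n') end.

Definition X_dim (K : X -> Prop) (n : nat) : Prop :=
  exists e : nat -> X,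
    (forall i, (i < n)%nat -> K (e i)) /\
    (forall c : nat -> C, vsum n (fun i => @vscal X (c i) (e i)) = @vzero X ->
        forall i, (i < n)%nat -> c i = C0) /\
    (forall y, K y -> exists c : nat -> C, y = vsum n (fun i => @vscal X (c i) (e i))).

Definition orth_proj (P : X -> X) : Prop :=
  (forall x y, P (@vadd X x y) = @vadd X (P x) (P y)) /\
  (forall a x, P (@vscal X a x) = @vscal X a (P x)) /\
  (forall x, P (P x) = P x) /\
  (forall x y, @inner X (P x) y = @inner X x (P y)).

Definition Pperp (P : X -> X) (x : X) : X := vsub x (P x).

(* kernel of the adjoint T^* : y in Ker T^*  iff  <T x, y> = 0 for all x *)
Definition ker_adj (T : X -> X) (y : X) : Prop := forall x, @inner X (T x) y = C0.

(* ---------- H^2(D,X): power series  sum_j f j z^j  given by coefficients ---------- *)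
Definition in_H2 (f : nat -> X) : Prop :=
  exists l, Un_cv (fun n => sum_f_R0 (fun k => norm2 (f k)) n) l.

Definition H2_orth (f g : nat -> X) : Prop :=
  Un_cv (fun n => sum_f_R0 (fun k => Re (@inner X (f k) (g k))) n) 0 /\
  Un_cv (fun n => sum_f_R0 (fun k => Im (@inner X (f k) (g k))) n) 0.

(* ||f - g||_{H^2}^2 <= eps  (sup of the partial sums) *)
Definition H2_close (f g : nat -> X) (eps : R) : Prop :=
  forall n, sum_f_R0 (fun j => norm2 (vsub (f j) (g j))) n <= eps.

Definition H2_conv (u : nat -> nat -> X) (f : nat -> X) : Prop :=
  forall eps, eps > 0 -> exists K, forall k, (K <= k)%nat -> H2_close (u k) f eps.

Definition closed_subspace (F : (nat -> X) -> Prop) : Prop :=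
  (forall f, F f -> in_H2 f) /\
  F (fun _ => @vzero X) /\
  (forall f g, F f -> F g -> F (fun j => @vadd X (f j) (g j))) /\
  (forall a f, F f -> F (fun j => @vscal X a (f j))) /\
  (forall u f, (forall k, F (u k)) -> in_H2 f -> H2_conv u f -> F f).

Definition H2_dim (F : (nat -> X) -> Prop) (n : nat) : Prop :=
  exists e : nat -> nat -> X,
    (forall i, (i < n)%nat -> F (e i)) /\
    (forall c : nat -> C,
        (forall j, vsum n (fun i => @vscal X (c i) (e i j)) = @vzero X) ->
        forall i, (i < n)%nat -> c i = C0) /\
    (forall f, F f -> exists c : nat -> C,
        forall j, f j = vsum n (fun i => @vscal X (c i) (e i j))).

Definition is_poly_deg (p : nat -> X) (N : nat) : Prop :=
  p N <> @vzero X /\ forall j, (N < j)%nat -> p j = @vzero X.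

Definition bshift (f : nat -> X) : nat -> X := fun j => f (S j).

Fixpoint bshift_iter (n : nat) (f : nat -> X) : nat -> X :=
  match n with O => f | S n' => bshift (bshift_iter n' f) end.

Definition span_orbit (p : nat -> X) (g : nat -> X) : Prop :=
  exists (m : nat) (c : nat -> C),
    forall j, g j = vsum m (fun i => @vscal X (c i) (bshift_iter i p j)).

(* E_p = closed linear span of { S^{*n} p : n >= 0 } *)
Definition E_span (p : nat -> X) (f : nat -> X) : Prop :=
  in_H2 f /\ forall eps, eps > 0 -> exists g, span_orbit p g /\ H2_close f g eps.

(* multiplication of a power series h by  P^perp + z P  *)
Definition factor_apply (P : X -> X) (h : nat -> X) : nat -> X :=
  fun j => @vadd X (Pperp P (h j)) (match j with O => @vzero X | S j' => P (h j') end).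

(* Theta g  with  Theta(z) = (P_k^perp + z P_k) ... (P_1^perp + z P_1) *)
Fixpoint theta_apply (Ps : nat -> X -> X) (k : nat) (g : nat -> X) : nat -> X :=
  match k with O => g | S k' => factor_apply (Ps (S k')) (theta_apply Ps k' g) end.

(* Theta(0) = P_k^perp ... P_1^perp *)
Fixpoint theta0 (Ps : nat -> X -> X) (k : nat) (x : X) : X :=
  match k with O => x | S k' => Pperp (Ps (S k')) (theta0 Ps k' x) end.

End H.

Arguments vsub {X}. Arguments norm2 {X}. Arguments vnorm {X}. Arguments vsum {X}.
Arguments X_dim {X}. Arguments orth_proj {X}. Arguments Pperp {X}. Arguments ker_adj {X}.
Arguments in_H2 {X}. Arguments H2_orth {X}. Arguments H2_close {X}. Arguments H2_conv {X}.
Arguments closed_subspace {X}. Arguments H2_dim {X}. Arguments is_poly_deg {X}.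
Arguments bshift {X}. Arguments bshift_iter {X}. Arguments span_orbit {X}.
Arguments E_span {X}. Arguments factor_apply {X}. Arguments theta_apply {X}.
Arguments theta0 {X}.

(* Everything reduces to finitely supported coefficient sequences.  Writing
   Theta^* for the formal adjoint of multiplication by Theta (a composite of the
   maps  f |-> P^perp f + P S^* f),  the orthocomplement of Theta H^2 is exactly
   the set of sequences supported in [0,N] annihilated by Theta^*
   ([perp_range_iff]): on such sequences <f, Theta g> = <Theta^* f, g>, and
   Theta has a right inverse up to multiplication by z^(N+1).

   (i) => (ii).  Peeling off the top coefficient of p with the projection onto
   the line C p_N lowers the degree; by induction we obtain projections adapted
   to p: Ker Theta^* = span {S^{*i} p} and Ker Theta(0)^* = C p_N
   ([factorisation]).  A finite-dimensional span being closed, E_p equals that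
   span ([E_span_iff_orbit]), whose dimension is N+1.

   (ii) => (i).  F is S^*-invariant, consists of polynomials of degree <= N,
   and its constant elements lie on the line Ker Theta(0)^*.  An element p of
   maximal degree k then generates F under S^* ([invariant_orbit_span]);
   comparing dimensions forces k = N, and closedness of F gives F = E_p. *)

From Stdlib Require Import Reals Lra Lia Classical.
From Stdlib Require Import FunctionalExtensionality ClassicalEpsilon.
Open Scope R_scope.

Lemma Ceq (a b : C) : Re a = Re b -> Im a = Im b -> a = b.
Proof. destruct a, b; simpl; intros; subst; reflexivity. Qed.

Definition Copp (a : C) : C := mkC (- Re a) (- Im a).
Definition Csub (a b : C) : C := Cadd a (Copp b).
Definition Cnrm (a : C) : R := Re a * Re a + Im a * Im a.
Definition Cinv (a : C) : C := mkC (Re a / Cnrm a) (- Im a / Cnrm a).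
Definition Cdiv (a b : C) : C := Cmul a (Cinv b).

Lemma C_ring : ring_theory C0 C1 Cadd Cmul Csub Copp (@eq C).
Proof. constructor; intros; apply Ceq; simpl; ring. Qed.
Add Ring Cring : C_ring.

Lemma C1_ne_C0 : C1 <> C0.
Proof. intros H. assert (Re C1 = Re C0) by (rewrite H; reflexivity). simpl in *. lra. Qed.

Lemma Cnrm_pos (a : C) : a <> C0 -> 0 < Cnrm a.
Proof.
  intros H. destruct a as [x y]; unfold Cnrm; simpl.
  destruct (Req_dec x 0), (Req_dec y 0); subst; try (exfalso; apply H; reflexivity);
    nra.
Qed.

Lemma C_field : field_theory C0 C1 Cadd Cmul Csub Copp Cdiv Cinv (@eq C).
Proof.
  constructor.
  - exact C_ring.
  - exact C1_ne_C0.
  - reflexivity.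
  - intros a Ha. apply Cnrm_pos in Ha. apply Ceq; unfold Cinv, Cnrm in *; simpl in *; field; lra.
Qed.
Add Field Cfield : C_field.

Lemma Cconj_mul a b : Cconj (Cmul a b) = Cmul (Cconj a) (Cconj b).
Proof. apply Ceq; simpl; ring. Qed.

Lemma Cconj_inv a : Cconj (Cinv a) = Cinv (Cconj a).
Proof.
  apply Ceq; unfold Cinv, Cnrm; simpl;
    replace (- Im a * - Im a) with (Im a * Im a) by ring; unfold Rdiv; ring.
Qed.

Notation "x +v y" := (vadd _ x y) (at level 50, left associativity).
Notation "a *v x" := (vscal _ a x) (at level 40, no associativity).
Notation "-v x" := (vopp _ x) (at level 35).
Notation "'0v'" := (vzero _).
Notation "<< x , y >>" := (inner _ x y).

Section VectorAlgebra.
Context {X : Hilbert}.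
Implicit Types x y z w : X.

Lemma vadd_0l x : 0v +v x = x.
Proof. rewrite vadd_comm. apply vadd_0. Qed.

Lemma vadd_cancel x y z : x +v y = x +v z -> y = z.
Proof.
  intros H. assert (E : (-v x) +v (x +v y) = (-v x) +v (x +v z)) by (rewrite H; reflexivity).
  rewrite !vadd_assoc, (vadd_comm _ (-v x) x), vadd_opp, !vadd_0l in E. exact E.
Qed.

Lemma vadd_eq0 x y : x +v y = x -> y = 0v.
Proof. intros H. apply (vadd_cancel x). rewrite vadd_0. exact H. Qed.

Lemma vscal_0c x : C0 *v x = 0v.
Proof.
  apply (vadd_eq0 (C0 *v x)). rewrite <- vscal_distr_c. f_equal. apply Ceq; simpl; ring.
Qed.

Lemma vscal_c0 (a : C) : a *v (0v : X) = 0v.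
Proof. apply (vadd_eq0 (a *v (0v : X))). rewrite <- vscal_distr_v, vadd_0. reflexivity. Qed.

Lemma vopp_unique x y : x +v y = 0v -> y = -v x.
Proof. intros H. apply (vadd_cancel x). rewrite H, vadd_opp. reflexivity. Qed.

Lemma vscal_m1 x : Copp C1 *v x = -v x.
Proof.
  apply vopp_unique. rewrite <- (vscal_1 _ x) at 1. rewrite <- vscal_distr_c.
  replace (Cadd C1 (Copp C1)) with C0 by ring. apply vscal_0c.
Qed.

Lemma vopp_opp x : -v (-v x) = x.
Proof. symmetry. apply vopp_unique. rewrite vadd_comm. apply vadd_opp. Qed.

Lemma vadd_swap4 x y z w : (x +v y) +v (z +v w) = (x +v z) +v (y +v w).
Proof. rewrite !vadd_assoc. f_equal. rewrite <- !vadd_assoc. f_equal. apply vadd_comm. Qed.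

Lemma vopp_add x y : -v (x +v y) = (-v x) +v (-v y).
Proof.
  symmetry; apply vopp_unique. rewrite vadd_swap4, !vadd_opp. apply vadd_0.
Qed.

Lemma vscal_opp a x : a *v (-v x) = -v (a *v x).
Proof. apply vopp_unique. rewrite <- vscal_distr_v, vadd_opp. apply vscal_c0. Qed.

Lemma vopp_0 : -v (0v : X) = 0v.
Proof. symmetry. apply vopp_unique. apply vadd_0. Qed.

Lemma vsub_add x y : x = y +v vsub x y.
Proof.
  unfold vsub. rewrite (vadd_comm _ x), vadd_assoc, vadd_opp, vadd_0l. reflexivity.
Qed.

Lemma vsub_diag x : vsub x x = 0v.
Proof. apply vadd_opp. Qed.

Lemma vsub_0 x : vsub x 0v = x.
Proof. unfold vsub. rewrite vopp_0. apply vadd_0. Qed.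

Lemma vscal_eq0 a x : a *v x = 0v -> a <> C0 -> x = 0v.
Proof.
  intros H Ha. rewrite <- (vscal_1 _ x).
  replace C1 with (Cmul (Cinv a) a) by (field; exact Ha).
  rewrite <- vscal_assoc, H. apply vscal_c0.
Qed.

Lemma inner_0_l y : << 0v, y >> = C0.
Proof. rewrite <- (vscal_0c (0v : X)), inner_scal_l. ring. Qed.

Lemma inner_add_r x y z : << x, y +v z >> = Cadd (<< x, y >>) (<< x, z >>).
Proof.
  rewrite inner_conj, inner_add_l, (inner_conj _ y x), (inner_conj _ z x).
  apply Ceq; simpl; ring.
Qed.

Lemma inner_scal_r a x y : << x, a *v y >> = Cmul (Cconj a) (<< x, y >>).
Proof. rewrite inner_conj, inner_scal_l, (inner_conj _ y x). apply Ceq; simpl; ring. Qed.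

Lemma inner_0_r y : << y, 0v >> = C0.
Proof. rewrite inner_conj, inner_0_l. apply Ceq; simpl; ring. Qed.

Lemma inner_opp_l x y : << -v x, y >> = Copp (<< x, y >>).
Proof. rewrite <- vscal_m1, inner_scal_l. ring. Qed.

Lemma inner_opp_r x y : << x, -v y >> = Copp (<< x, y >>).
Proof. rewrite <- vscal_m1, inner_scal_r. apply Ceq; simpl; ring. Qed.

Lemma inner_self_Im x : Im (<< x, x >>) = 0.
Proof.
  assert (H : Im (<< x, x >>) = Im (Cconj (<< x, x >>))) by (rewrite <- inner_conj; reflexivity).
  simpl in H. lra.
Qed.

Lemma inner_self_conj x : Cconj (<< x, x >>) = << x, x >>.
Proof. apply Ceq; simpl; [reflexivity | rewrite inner_self_Im; ring]. Qed.

Lemma norm2_nonneg x : 0 <= norm2 x.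
Proof. apply inner_pos. Qed.

Lemma norm2_0 x : norm2 x = 0 -> x = 0v.
Proof. intros H. apply inner_def, Ceq; [exact H | apply inner_self_Im]. Qed.

Lemma norm2_zero : norm2 (0v : X) = 0.
Proof. unfold norm2. rewrite inner_0_l. reflexivity. Qed.

Lemma norm2_vsub_sym x y : norm2 (vsub x y) = norm2 (vsub y x).
Proof.
  replace (vsub y x) with (-v (vsub x y))
    by (unfold vsub; rewrite vopp_add, vopp_opp, vadd_comm; reflexivity).
  unfold norm2. rewrite inner_opp_l, inner_opp_r. simpl. ring.
Qed.

End VectorAlgebra.

Section OrthogonalProjection.
Context {X : Hilbert} (P : X -> X) (HP : orth_proj P).

Lemma P_add x y : P (x +v y) = P x +v P y. Proof. apply HP. Qed.
Lemma P_scal a x : P (a *v x) = a *v P x. Proof. apply HP. Qed.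
Lemma P_idem x : P (P x) = P x. Proof. apply HP. Qed.
Lemma P_adj x y : << P x, y >> = << x, P y >>. Proof. apply HP. Qed.

Lemma P_0 : P 0v = 0v.
Proof. rewrite <- (vscal_0c (0v : X)), P_scal, !vscal_0c. reflexivity. Qed.

Lemma P_opp x : P (-v x) = -v (P x).
Proof. rewrite <- !vscal_m1. apply P_scal. Qed.

Lemma Pp_add x y : Pperp P (x +v y) = Pperp P x +v Pperp P y.
Proof. unfold Pperp, vsub. rewrite P_add, vopp_add. apply vadd_swap4. Qed.

Lemma Pp_scal a x : Pperp P (a *v x) = a *v Pperp P x.
Proof. unfold Pperp, vsub. rewrite P_scal, vscal_distr_v, vscal_opp. reflexivity. Qed.

Lemma Pp_opp x : Pperp P (-v x) = -v (Pperp P x).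
Proof. rewrite <- !vscal_m1. apply Pp_scal. Qed.

Lemma Pp_0 : Pperp P 0v = 0v.
Proof. unfold Pperp, vsub. rewrite P_0, vadd_opp. reflexivity. Qed.

Lemma P_Pp x : P (Pperp P x) = 0v.
Proof. unfold Pperp, vsub. rewrite P_add, P_opp, P_idem, vadd_opp. reflexivity. Qed.

Lemma Pp_P x : Pperp P (P x) = 0v.
Proof. unfold Pperp, vsub. rewrite P_idem, vadd_opp. reflexivity. Qed.

Lemma Pp_Pp x : Pperp P (Pperp P x) = Pperp P x.
Proof. unfold Pperp at 1, vsub at 1. rewrite P_Pp, vopp_0, vadd_0. reflexivity. Qed.

Lemma P_decomp x : x = P x +v Pperp P x.
Proof. apply vsub_add. Qed.

Lemma Pp_adj x y : << Pperp P x, y >> = << x, Pperp P y >>.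
Proof.
  unfold Pperp, vsub. rewrite inner_add_l, inner_add_r, inner_opp_l, inner_opp_r, P_adj.
  reflexivity.
Qed.

Lemma P_split x y : P x +v Pperp P y = 0v -> P x = 0v /\ Pperp P y = 0v.
Proof.
  intros H.
  assert (H1 : P (P x +v Pperp P y) = P 0v) by (rewrite H; reflexivity).
  rewrite P_add, P_idem, P_Pp, vadd_0, P_0 in H1.
  split; [exact H1 |]. rewrite H1, vadd_0l in H. exact H.
Qed.

End OrthogonalProjection.

Definition proj {X : Hilbert} (u : X) (x : X) : X := Cdiv (<< x, u >>) (<< u, u >>) *v u.

Lemma proj_orth {X : Hilbert} (u : X) : u <> 0v -> orth_proj (proj u).
Proof.
  intros Hu. assert (Huu : << u, u >> <> C0) by (intros E; apply Hu, inner_def, E).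
  unfold proj, Cdiv. repeat split.
  - intros x y. rewrite inner_add_l, <- vscal_distr_c. f_equal. ring.
  - intros a x. rewrite inner_scal_l, vscal_assoc. f_equal. ring.
  - intros x. rewrite inner_scal_l. f_equal. field. exact Huu.
  - intros x y. rewrite inner_scal_l, inner_scal_r, Cconj_mul, Cconj_inv, inner_self_conj.
    rewrite (inner_conj _ y u), (inner_conj _ u x). apply Ceq; simpl; ring.
Qed.

Lemma proj_fix {X : Hilbert} (u : X) : u <> 0v -> proj u u = u.
Proof.
  intros Hu. unfold proj, Cdiv.
  replace (Cmul (<< u, u >>) (Cinv (<< u, u >>))) with C1
    by (field; intros E; apply Hu, inner_def, E).
  apply vscal_1.
Qed.

Fixpoint Csum (n : nat) (h : nat -> C) : C :=
  match n with O => C0 | S n' => Cadd (Csum n' h) (h n') end.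
Fixpoint Rsum (n : nat) (h : nat -> R) : R :=
  match n with O => 0 | S n' => Rsum n' h + h n' end.

Lemma sum_f_R0_Rsum h n : sum_f_R0 h n = Rsum (S n) h.
Proof. induction n; simpl; [ring | rewrite IHn; simpl; ring]. Qed.

Lemma Re_Csum n h : Re (Csum n h) = Rsum n (fun k => Re (h k)).
Proof. induction n; simpl; [reflexivity | rewrite IHn; reflexivity]. Qed.

Lemma Im_Csum n h : Im (Csum n h) = Rsum n (fun k => Im (h k)).
Proof. induction n; simpl; [reflexivity | rewrite IHn; reflexivity]. Qed.

Lemma Csum_ext n h h' : (forall i, (i < n)%nat -> h i = h' i) -> Csum n h = Csum n h'.
Proof.
  induction n; intros H; simpl; [reflexivity |].
  rewrite IHn by (intros; apply H; lia). rewrite H by lia. reflexivity.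
Qed.

Lemma Csum_add n h k : Csum n (fun i => Cadd (h i) (k i)) = Cadd (Csum n h) (Csum n k).
Proof. induction n; simpl; [apply Ceq; simpl; ring | rewrite IHn; ring]. Qed.

Lemma Csum_zero n h : (forall i, (i < n)%nat -> h i = C0) -> Csum n h = C0.
Proof.
  induction n; intros H; simpl; [reflexivity |].
  rewrite IHn by (intros; apply H; lia). rewrite H by lia. ring.
Qed.

Lemma Csum_single n h i0 : (i0 < n)%nat ->
  (forall i, (i < n)%nat -> i <> i0 -> h i = C0) -> Csum n h = h i0.
Proof.
  induction n; intros Hi H; [lia |]. simpl.
  destruct (Nat.eq_dec i0 n) as [-> | Hne].
  - rewrite Csum_zero by (intros; apply H; lia). ring.
  - rewrite IHn by (try lia; intros; apply H; lia). rewrite (H n) by lia. ring.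
Qed.

Lemma Csum_lin_sub n (c t x : nat -> C) z :
  Csum n (fun i => Cmul (c i) (Csub (x i) (Cmul (t i) z))) =
  Csub (Csum n (fun i => Cmul (c i) (x i))) (Cmul (Csum n (fun i => Cmul (c i) (t i))) z).
Proof. induction n; simpl; [ring | rewrite IHn; ring]. Qed.

Lemma Rsum_ext n h h' : (forall i, (i < n)%nat -> h i = h' i) -> Rsum n h = Rsum n h'.
Proof.
  induction n; intros H; simpl; [reflexivity |].
  rewrite IHn by (intros; apply H; lia). rewrite H by lia. reflexivity.
Qed.

Lemma Rsum_nonneg n h : (forall i, (i < n)%nat -> 0 <= h i) -> 0 <= Rsum n h.
Proof.
  induction n; intros H; simpl; [lra |].
  pose proof (IHn (fun i Hi => H i ltac:(lia))). pose proof (H n ltac:(lia)). lra.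
Qed.

Lemma Rsum_term n h i : (forall i, (i < n)%nat -> 0 <= h i) -> (i < n)%nat -> h i <= Rsum n h.
Proof.
  induction n; intros H Hi; [lia |]. simpl.
  pose proof (H n ltac:(lia)).
  destruct (Nat.eq_dec i n) as [-> |].
  - pose proof (Rsum_nonneg n h (fun j Hj => H j ltac:(lia))). lra.
  - pose proof (IHn (fun j Hj => H j ltac:(lia)) ltac:(lia)). lra.
Qed.

Lemma Rsum_add n h k : Rsum n (fun i => h i + k i) = Rsum n h + Rsum n k.
Proof. induction n; simpl; [ring | rewrite IHn; ring]. Qed.

Lemma Rsum_scal n a h : Rsum n (fun i => a * h i) = a * Rsum n h.
Proof. induction n; simpl; [ring | rewrite IHn; ring]. Qed.

Lemma Rsum_extend n m h : (n <= m)%nat ->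
  (forall i, (n <= i < m)%nat -> h i = 0) -> Rsum m h = Rsum n h.
Proof.
  intros Hnm. induction Hnm; intros H; [reflexivity |]. simpl.
  rewrite IHHnm by (intros; apply H; lia). rewrite H by lia. ring.
Qed.

Section VectorSums.
Context {X : Hilbert}.

Lemma vsum_ext m (h h' : nat -> X) :
  (forall i, (i < m)%nat -> h i = h' i) -> vsum m h = vsum m h'.
Proof.
  induction m; intros H; simpl; [reflexivity |].
  rewrite IHm by (intros; apply H; lia). rewrite H by lia. reflexivity.
Qed.

Lemma vsum_zero m (h : nat -> X) : (forall i, (i < m)%nat -> h i = 0v) -> vsum m h = 0v.
Proof.
  induction m; intros H; simpl; [reflexivity |].
  rewrite IHm by (intros; apply H; lia). rewrite H by lia. apply vadd_0.
Qed.

Lemma vsum_single m (h : nat -> X) i0 : (i0 < m)%nat ->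
  (forall i, (i < m)%nat -> i <> i0 -> h i = 0v) -> vsum m h = h i0.
Proof.
  induction m; intros Hi H; [lia |]. simpl.
  destruct (Nat.eq_dec i0 m) as [-> | Hne].
  - rewrite vsum_zero by (intros; apply H; lia). apply vadd_0l.
  - rewrite IHm by (try lia; intros; apply H; lia). rewrite (H m) by lia. apply vadd_0.
Qed.

Lemma vsum_add m (h k : nat -> X) : vsum m (fun i => h i +v k i) = vsum m h +v vsum m k.
Proof.
  induction m; simpl; [rewrite vadd_0; reflexivity |].
  rewrite IHm. apply vadd_swap4.
Qed.

Lemma vsum_lin (f : X -> X) m (h : nat -> X) :
  (forall x y, f (x +v y) = f x +v f y) -> f 0v = 0v ->
  f (vsum m h) = vsum m (fun i => f (h i)).
Proof. intros Ha H0. induction m; simpl; [exact H0 | rewrite Ha, IHm; reflexivity]. Qed.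

Lemma vsum_scal a m (h : nat -> X) : a *v vsum m h = vsum m (fun i => a *v h i).
Proof. apply vsum_lin; [intros; apply vscal_distr_v | apply vscal_c0]. Qed.

Lemma vsum_extend n m (h : nat -> X) : (n <= m)%nat ->
  (forall i, (n <= i < m)%nat -> h i = 0v) -> vsum m h = vsum n h.
Proof.
  intros Hnm. induction Hnm; intros H; [reflexivity |]. simpl.
  rewrite IHHnm by (intros; apply H; lia). rewrite H by lia. apply vadd_0.
Qed.

Lemma vsum_update m (c : nat -> C) (x : nat -> X) i0 a : (i0 < m)%nat ->
  vsum m (fun i => c i *v x i) +v (a *v x i0) =
  vsum m (fun i => (if Nat.eqb i i0 then Cadd (c i) a else c i) *v x i).
Proof.
  induction m; intros Hi; [lia |]. simpl.
  destruct (Nat.eq_dec i0 m) as [-> | Hne].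
  - rewrite Nat.eqb_refl.
    rewrite (vsum_ext m (fun i => (if Nat.eqb i m then Cadd (c i) a else c i) *v x i)
                        (fun i => c i *v x i)).
    + rewrite vscal_distr_c, vadd_assoc. reflexivity.
    + intros i Hi'. destruct (Nat.eqb_spec i m); [lia | reflexivity].
  - destruct (Nat.eqb_spec m i0); [lia |].
    rewrite <- IHm by lia. rewrite <- !vadd_assoc. f_equal. apply vadd_comm.
Qed.

Lemma vsum_exchange n m (c : nat -> C) (a : nat -> nat -> C) (x : nat -> X) :
  vsum n (fun i => c i *v vsum m (fun l => a i l *v x l)) =
  vsum m (fun l => Csum n (fun i => Cmul (c i) (a i l)) *v x l).
Proof.
  induction n; simpl.
  - symmetry. apply vsum_zero. intros. apply vscal_0c.
  - rewrite IHn, vsum_scal, <- vsum_add. apply vsum_ext. intros l _.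
    rewrite vscal_assoc, <- vscal_distr_c. reflexivity.
Qed.

End VectorSums.

(* Coefficient sequences.  [supp K f]: f is a polynomial of degree < K;
   [monomial k x] is the sequence of x z^k. *)

Definition supp {X : Hilbert} (K : nat) (f : nat -> X) : Prop :=
  forall j, (K <= j)%nat -> f j = 0v.
Definition monomial {X : Hilbert} (k : nat) (x : X) : nat -> X :=
  fun i => if Nat.eqb i k then x else 0v.

Lemma bshift_iter_eq {X : Hilbert} i (p : nat -> X) j : bshift_iter i p j = p (i + j)%nat.
Proof.
  revert j. induction i; intros j; simpl; [reflexivity |].
  unfold bshift. rewrite IHi. f_equal. lia.
Qed.

Lemma bshift_iter_top {X : Hilbert} d (f : nat -> X) :
  supp (S d) f -> bshift_iter d f = monomial 0 (f d).
Proof.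
  intros Hs. apply functional_extensionality. intros j.
  rewrite bshift_iter_eq. unfold monomial.
  destruct (Nat.eqb_spec j 0) as [-> |]; [f_equal; lia | apply Hs; lia].
Qed.

Lemma ucv_const (u : nat -> R) m a l :
  (forall n, (m <= n)%nat -> u n = a) -> (Un_cv u l <-> l = a).
Proof.
  intros H. assert (Ha : Un_cv u a).
  { intros eps He. exists m. intros n Hn. rewrite H by lia.
    unfold Rdist. rewrite Rminus_diag, Rabs_R0. exact He. }
  split; [intros Hl; eapply UL_sequence; eauto | intros ->; exact Ha].
Qed.

Lemma in_H2_supp {X : Hilbert} K (f : nat -> X) : supp K f -> in_H2 f.
Proof.
  intros H. exists (Rsum K (fun k => norm2 (f k))).
  apply (ucv_const _ K (Rsum K (fun k => norm2 (f k)))); [| reflexivity].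
  intros n Hn. rewrite sum_f_R0_Rsum. apply Rsum_extend; [lia |].
  intros i Hi. rewrite H by lia. apply norm2_zero.
Qed.

Lemma H2_orth_fin {X : Hilbert} (f h : nat -> X) m :
  (forall k, (m <= k)%nat -> << f k, h k >> = C0) ->
  (H2_orth f h <-> Csum m (fun k => << f k, h k >>) = C0).
Proof.
  intros H. unfold H2_orth.
  rewrite (ucv_const _ m (Re (Csum m (fun k => << f k, h k >>)))).
  2:{ intros n Hn. rewrite sum_f_R0_Rsum, Re_Csum. apply Rsum_extend; [lia |].
      intros i Hi. rewrite H by lia. reflexivity. }
  rewrite (ucv_const _ m (Im (Csum m (fun k => << f k, h k >>)))).
  2:{ intros n Hn. rewrite sum_f_R0_Rsum, Im_Csum. apply Rsum_extend; [lia |].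
      intros i Hi. rewrite H by lia. reflexivity. }
  split; [intros [H1 H2]; apply Ceq; simpl; auto | intros ->; simpl; auto].
Qed.

Lemma Csum_self_zero {X : Hilbert} m (g : nat -> X) :
  Csum m (fun k => << g k, g k >>) = C0 -> forall k, (k < m)%nat -> g k = 0v.
Proof.
  intros H k Hk. apply norm2_0.
  assert (E : Re (Csum m (fun k => << g k, g k >>)) = 0) by (rewrite H; reflexivity).
  rewrite Re_Csum in E.
  pose proof (Rsum_term m (fun k => norm2 (g k)) k (fun i _ => norm2_nonneg (g i)) Hk).
  pose proof (norm2_nonneg (g k)). unfold norm2 in *. lra.
Qed.

(* The formal adjoint of Theta.  The adjoint of  h |-> P^perp h + z P h  is
   f |-> P^perp f + P S^* f, so Theta^* = B_1 o ... o B_n; Theta(0)^* is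
   similarly P_1^perp ... P_n^perp. *)

Definition orthP {X : Hilbert} (Ps : nat -> X -> X) (n : nat) : Prop :=
  forall i, (1 <= i <= n)%nat -> orth_proj (Ps i).

Definition factor_adj {X : Hilbert} (P : X -> X) (f : nat -> X) : nat -> X :=
  fun j => Pperp P (f j) +v P (f (S j)).
Fixpoint theta_adj {X : Hilbert} (Ps : nat -> X -> X) (n : nat) (f : nat -> X) : nat -> X :=
  match n with O => f | S k => theta_adj Ps k (factor_adj (Ps (S k)) f) end.
Fixpoint theta0_star {X : Hilbert} (Ps : nat -> X -> X) (n : nat) (y : X) : X :=
  match n with O => y | S k => theta0_star Ps k (Pperp (Ps (S k)) y) end.

Definition fin_kernel {X : Hilbert} (Ps : nat -> X -> X) (n : nat) (f : nat -> X) : Prop :=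
  supp n f /\ forall j, theta_adj Ps n f j = 0v.

Lemma orthP_S {X : Hilbert} (Ps : nat -> X -> X) n : orthP Ps (S n) -> orthP Ps n.
Proof. intros H i Hi. apply H. lia. Qed.

Lemma orthP_top {X : Hilbert} (Ps : nat -> X -> X) n : orthP Ps (S n) -> orth_proj (Ps (S n)).
Proof. intros H. apply H. lia. Qed.

Lemma factor_adj_supp {X : Hilbert} (P : X -> X) K f :
  orth_proj P -> supp K f -> supp K (factor_adj P f).
Proof.
  intros HP H j Hj. unfold factor_adj. rewrite !H by lia. rewrite (Pp_0 _ HP), (P_0 _ HP).
  apply vadd_0.
Qed.

Lemma theta_adj_supp {X : Hilbert} (Ps : nat -> X -> X) n K f :
  orthP Ps n -> supp K f -> supp K (theta_adj Ps n f).
Proof.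
  revert f. induction n; intros f HPs Hf; simpl; [exact Hf |].
  apply IHn; [apply orthP_S; auto | apply factor_adj_supp; auto; apply orthP_top; auto].
Qed.

Lemma theta_adj_ext {X : Hilbert} (Ps : nat -> X -> X) n f g :
  (forall j, f j = g j) -> forall j, theta_adj Ps n f j = theta_adj Ps n g j.
Proof.
  revert f g. induction n; intros f g H; simpl; [exact H |].
  apply IHn. intros j. unfold factor_adj. rewrite !H. reflexivity.
Qed.

Lemma theta_adj_bshift {X : Hilbert} (Ps : nat -> X -> X) n f j :
  theta_adj Ps n (bshift f) j = theta_adj Ps n f (S j).
Proof.
  revert f j. induction n; intros f j; simpl; [reflexivity |].
  apply (IHn (factor_adj (Ps (S n)) f) j).
Qed.

Lemma theta_adj_monomial0 {X : Hilbert} (Ps : nat -> X -> X) n y : orthP Ps n ->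
  forall j, theta_adj Ps n (monomial 0 y) j = monomial 0 (theta0_star Ps n y) j.
Proof.
  revert y. induction n; intros y HPs j; simpl; [reflexivity |].
  pose proof (orthP_top _ _ HPs) as HP.
  rewrite <- IHn by (apply orthP_S; auto).
  apply theta_adj_ext. intros [|i]; unfold factor_adj, monomial; simpl.
  - rewrite (P_0 _ HP), vadd_0. reflexivity.
  - rewrite (P_0 _ HP), (Pp_0 _ HP), vadd_0. reflexivity.
Qed.

Lemma theta_adj_const_iff {X : Hilbert} (Ps : nat -> X -> X) n y : orthP Ps n ->
  (forall j, theta_adj Ps n (monomial 0 y) j = 0v) <-> theta0_star Ps n y = 0v.
Proof.
  intros HPs. split.
  - intros H. specialize (H 0%nat). rewrite theta_adj_monomial0 in H by exact HPs. exact H.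
  - intros H j. rewrite theta_adj_monomial0, H by exact HPs.
    unfold monomial. destruct (Nat.eqb j 0); reflexivity.
Qed.

Lemma theta0_adjoint {X : Hilbert} (Ps : nat -> X -> X) n x y : orthP Ps n ->
  << theta0 Ps n x, y >> = << x, theta0_star Ps n y >>.
Proof.
  revert y. induction n; intros y HPs; simpl; [reflexivity |].
  rewrite (Pp_adj _ (orthP_top _ _ HPs)). apply IHn, orthP_S, HPs.
Qed.

Lemma ker_adj_iff {X : Hilbert} (Ps : nat -> X -> X) n y : orthP Ps n ->
  ker_adj (theta0 Ps n) y <-> theta0_star Ps n y = 0v.
Proof.
  intros HPs. split.
  - intros H. specialize (H (theta0_star Ps n y)).
    rewrite theta0_adjoint in H by exact HPs. apply inner_def, H.
  - intros H x. rewrite theta0_adjoint, H by exact HPs. apply inner_0_r.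
Qed.

(* The adjoint identity  <f, (P^perp + zP) g> = <B_P f, g>  over [0, m), up to a
   boundary term which vanishes when f is supported in [0, m). *)
Lemma factor_adj_identity {X : Hilbert} (P : X -> X) (f g : nat -> X) m : orth_proj P ->
  Cadd (Csum m (fun j => << f j, factor_apply P g j >>))
       (match m with O => C0 | S m' => << P (f m), g m' >> end) =
  Csum m (fun j => << factor_adj P f j, g j >>).
Proof.
  intros HP. induction m; simpl; [ring |].
  rewrite <- IHm. unfold factor_apply, factor_adj.
  rewrite inner_add_r, inner_add_l, (Pp_adj _ HP).
  destruct m; [rewrite inner_0_r; ring | rewrite (P_adj _ HP (f (S m)) (g m)); ring].
Qed.

Lemma theta_adjoint {X : Hilbert} (Ps : nat -> X -> X) n (f g : nat -> X) m :
  orthP Ps n -> supp m f ->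
  Csum m (fun j => << f j, theta_apply Ps n g j >>) =
  Csum m (fun j => << theta_adj Ps n f j, g j >>).
Proof.
  revert f. induction n; intros f HPs Hf; simpl; [reflexivity |].
  pose proof (orthP_top _ _ HPs) as HP.
  transitivity (Csum m (fun j => << factor_adj (Ps (S n)) f j, theta_apply Ps n g j >>)).
  - rewrite <- factor_adj_identity by exact HP.
    destruct m; [ring |]. rewrite Hf, (P_0 _ HP), inner_0_l by lia. ring.
  - apply IHn; [apply orthP_S, HPs | apply factor_adj_supp; auto].
Qed.

(* A right inverse of Theta up to a power of z: since
   (P^perp + zP)(P + zP^perp) = z, the composite of the factors  P + z P^perp
   in reverse order inverts Theta up to multiplication by z^n. *)

Definition factor_inv {X : Hilbert} (P : X -> X) (h : nat -> X) : nat -> X :=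
  fun j => P (h j) +v (match j with O => 0v | S j' => Pperp P (h j') end).
Definition zshift {X : Hilbert} (h : nat -> X) : nat -> X :=
  fun j => match j with O => 0v | S j' => h j' end.
Fixpoint zshift_iter {X : Hilbert} (n : nat) (h : nat -> X) : nat -> X :=
  match n with O => h | S k => zshift_iter k (zshift h) end.
Fixpoint theta_rinv {X : Hilbert} (Ps : nat -> X -> X) (n : nat) (h : nat -> X) : nat -> X :=
  match n with O => h | S k => theta_rinv Ps k (factor_inv (Ps (S k)) h) end.

Lemma factor_apply_ext {X : Hilbert} (P : X -> X) a b :
  (forall j, a j = b j) -> forall j, factor_apply P a j = factor_apply P b j.
Proof.
  intros H j. unfold factor_apply. rewrite H. destruct j; [reflexivity | rewrite H; reflexivity].
Qed.

Lemma zshift_iter_ext {X : Hilbert} n (a b : nat -> X) :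
  (forall j, a j = b j) -> forall j, zshift_iter n a j = zshift_iter n b j.
Proof.
  revert a b. induction n; intros a b H j; simpl; [apply H |].
  apply IHn. intros [|i]; simpl; [reflexivity | apply H].
Qed.

Lemma zshift_iter_monomial {X : Hilbert} n k (x : X) :
  forall j, zshift_iter n (monomial k x) j = monomial (k + n) x j.
Proof.
  revert k. induction n; intros k j; simpl; [rewrite Nat.add_0_r; reflexivity |].
  rewrite (zshift_iter_ext n _ (monomial (S k) x)) by (intros [|i]; reflexivity).
  rewrite IHn. replace (S k + n)%nat with (k + S n)%nat by lia. reflexivity.
Qed.

Lemma factor_zshift_iter {X : Hilbert} (P : X -> X) k h : orth_proj P ->
  forall j, factor_apply P (zshift_iter k h) j = zshift_iter k (factor_apply P h) j.
Proof.
  revert h. induction k; intros h HP j; simpl; [reflexivity |].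
  rewrite IHk by exact HP. apply zshift_iter_ext.
  intros [|[|i]]; unfold factor_apply, zshift; simpl;
    [rewrite (Pp_0 _ HP), vadd_0 | rewrite (P_0 _ HP) |]; reflexivity.
Qed.

Lemma factor_factor_inv {X : Hilbert} (P : X -> X) h : orth_proj P ->
  forall j, factor_apply P (factor_inv P h) j = zshift h j.
Proof.
  intros HP [|j]; unfold factor_apply, factor_inv, zshift.
  - rewrite !vadd_0. apply (Pp_P _ HP).
  - rewrite (Pp_add _ HP), (Pp_P _ HP), (Pp_Pp _ HP), vadd_0l, (P_add _ HP), (P_idem _ HP).
    replace (P (match j with 0%nat => 0v | S j' => Pperp P (h j') end)) with (0v : X)
      by (destruct j; [rewrite (P_0 _ HP) | rewrite (P_Pp _ HP)]; reflexivity).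
    rewrite vadd_0, vadd_comm. symmetry. apply P_decomp.
Qed.

Lemma theta_rinv_spec {X : Hilbert} (Ps : nat -> X -> X) n h : orthP Ps n ->
  forall j, theta_apply Ps n (theta_rinv Ps n h) j = zshift_iter n h j.
Proof.
  revert h. induction n; intros h HPs j; simpl; [reflexivity |].
  pose proof (orthP_top _ _ HPs) as HP.
  rewrite (factor_apply_ext _ _ (zshift_iter n (factor_inv (Ps (S n)) h)))
    by (apply IHn, orthP_S, HPs).
  rewrite factor_zshift_iter by exact HP. apply zshift_iter_ext. apply factor_factor_inv, HP.
Qed.

Lemma theta_rinv_supp {X : Hilbert} (Ps : nat -> X -> X) n K h :
  orthP Ps n -> supp K h -> supp (K + n) (theta_rinv Ps n h).
Proof.
  revert K h. induction n; intros K h HPs H; simpl; [rewrite Nat.add_0_r; exact H |].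
  replace (K + S n)%nat with (S K + n)%nat by lia.
  apply IHn; [apply orthP_S, HPs |]. pose proof (orthP_top _ _ HPs) as HP.
  intros [|j] Hj; [lia |]. unfold factor_inv. rewrite !H by lia.
  rewrite (P_0 _ HP), (Pp_0 _ HP). apply vadd_0.
Qed.

Lemma theta_range_monomial {X : Hilbert} (Ps : nat -> X -> X) n j (x : X) :
  orthP Ps n -> (n <= j)%nat ->
  exists g, in_H2 g /\ forall k, theta_apply Ps n g k = monomial j x k.
Proof.
  intros HPs Hj. exists (theta_rinv Ps n (monomial (j - n) x)). split.
  - apply (in_H2_supp (S (j - n) + n)), theta_rinv_supp; [exact HPs |].
    intros i Hi. unfold monomial. destruct (Nat.eqb_spec i (j - n)); [lia | reflexivity].
  - intros k. rewrite theta_rinv_spec, zshift_iter_monomial by exact HPs.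
    replace (j - n + n)%nat with j by lia. reflexivity.
Qed.

Lemma perp_range_iff {X : Hilbert} (Ps : nat -> X -> X) n (f : nat -> X) : orthP Ps n ->
  (in_H2 f /\ forall g, in_H2 g -> H2_orth f (theta_apply Ps n g)) <-> fin_kernel Ps n f.
Proof.
  intros HPs. split.
  - intros [_ H].
    assert (Hs : supp n f).
    { intros j Hj. destruct (theta_range_monomial Ps n j (f j) HPs Hj) as [g [Hg Eg]].
      specialize (H g Hg). rewrite (H2_orth_fin _ _ (S j)) in H.
      2:{ intros k Hk. rewrite Eg. unfold monomial.
          destruct (Nat.eqb_spec k j); [lia | apply inner_0_r]. }
      rewrite (Csum_single _ _ j) in H; [| lia |].
      2:{ intros i Hi Hij. rewrite Eg. unfold monomial.
          destruct (Nat.eqb_spec i j); [lia | apply inner_0_r]. }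
      rewrite Eg in H. unfold monomial in H. rewrite Nat.eqb_refl in H. apply inner_def, H. }
    split; [exact Hs |].
    set (g := theta_adj Ps n f).
    assert (Hgs : supp n g) by (apply theta_adj_supp; auto).
    specialize (H g (in_H2_supp _ _ Hgs)).
    rewrite (H2_orth_fin _ _ n), theta_adjoint in H by (auto; intros k Hk;
      rewrite Hs by lia; apply inner_0_l).
    intros j. destruct (Nat.lt_ge_cases j n); [apply (Csum_self_zero n g H j); auto | apply Hgs; auto].
  - intros [Hs Ht]. split; [apply (in_H2_supp n), Hs |]. intros g _.
    apply (H2_orth_fin _ _ n); [intros k Hk; rewrite Hs by lia; apply inner_0_l |].
    rewrite theta_adjoint by auto. apply Csum_zero. intros i _. rewrite Ht. apply inner_0_l.
Qed.

Definition orbit_span {X : Hilbert} (n : nat) (p f : nat -> X) : Prop :=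
  exists c : nat -> C, forall j, f j = vsum n (fun i => c i *v p (i + j)%nat).

Definition adapted {X : Hilbert} (n : nat) (p : nat -> X) (Ps : nat -> X -> X) : Prop :=
  orthP Ps n /\
  (forall f, (forall j, theta_adj Ps n f j = 0v) <-> orbit_span n p f) /\
  (forall y, theta0_star Ps n y = 0v -> exists c, y = c *v p (pred n)).

Lemma orbit_span_supp {X : Hilbert} n (p g : nat -> X) : supp n p -> orbit_span n p g -> supp n g.
Proof.
  intros Hs [c Hc] j Hj. rewrite Hc. apply vsum_zero. intros i _.
  rewrite Hs by lia. apply vscal_c0.
Qed.

Lemma factor_adj_sub {X : Hilbert} (P : X -> X) (f g : nat -> X) j : orth_proj P ->
  factor_adj P (fun j => vsub (f j) (g j)) j = vsub (factor_adj P f j) (factor_adj P g j).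
Proof.
  intros HP. unfold factor_adj, vsub.
  rewrite (Pp_add _ HP), (P_add _ HP), (Pp_opp _ HP), (P_opp _ HP), vopp_add. apply vadd_swap4.
Qed.

Lemma factor_adj_orbit {X : Hilbert} (P : X -> X) (p : nat -> X) c m j : orth_proj P ->
  factor_adj P (fun j => vsum m (fun i => c i *v p (i + j)%nat)) j =
  vsum m (fun i => c i *v factor_adj P p (i + j)%nat).
Proof.
  intros HP. unfold factor_adj.
  rewrite (vsum_lin (Pperp P)), (vsum_lin P), <- vsum_add
    by (try apply Pp_add; try apply Pp_0; try apply P_add; try apply P_0; exact HP).
  apply vsum_ext. intros i _.
  rewrite (Pp_scal _ HP), (P_scal _ HP), <- vscal_distr_v, Nat.add_succ_r. reflexivity.
Qed.

Lemma factor_adj_kernel {X : Hilbert} (P : X -> X) (h : nat -> X) : orth_proj P ->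
  (forall j, factor_adj P h j = 0v) -> forall j, h j = monomial 0 (P (h 0%nat)) j.
Proof.
  intros HP Hh j.
  assert (Hs : forall j, P (h (S j)) = 0v /\ Pperp P (h j) = 0v)
    by (intros i; apply (P_split _ HP); rewrite vadd_comm; apply Hh).
  rewrite (P_decomp P (h j)). unfold monomial. destruct j as [|j]; simpl.
  - rewrite (proj2 (Hs 0%nat)). apply vadd_0.
  - rewrite (proj1 (Hs j)), (proj2 (Hs (S j))). apply vadd_0.
Qed.

(* Peeling off the top coefficient u = p_n of a polynomial p of degree n with
   the projection onto C u: B_P p has degree n - 1, the orbit spans correspond,
   and constants killed by P^perp lie on C u. *)
Section Peel.
Context {X : Hilbert} (n : nat) (p : nat -> X).
Hypothesis Hsupp : supp (S n) p.
Hypothesis Htop : p n <> 0v.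
Local Notation P := (proj (p n)).

Let HP : orth_proj P := proj_orth _ Htop.
Let Pfix : P (p n) = p n := proj_fix _ Htop.

Lemma peel_supp : supp n (factor_adj P p).
Proof.
  intros j Hj. unfold factor_adj. rewrite (Hsupp (S j)) by lia. rewrite (P_0 _ HP), vadd_0.
  destruct (Nat.eq_dec j n) as [-> | Hjn].
  - unfold Pperp. rewrite Pfix. apply vsub_diag.
  - rewrite (Hsupp j) by lia. apply (Pp_0 _ HP).
Qed.

Lemma peel_top_image : (0 < n)%nat -> P (factor_adj P p (pred n)) = p n.
Proof.
  intros Hn. unfold factor_adj. replace (S (pred n)) with n by lia.
  rewrite (P_add _ HP), (P_Pp _ HP), vadd_0l, (P_idem _ HP). exact Pfix.
Qed.

Lemma peel_top : (0 < n)%nat -> factor_adj P p (pred n) <> 0v.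
Proof.
  intros Hn E. apply Htop. rewrite <- peel_top_image, E by exact Hn. apply (P_0 _ HP).
Qed.

Lemma peel_restrict f : orbit_span (S n) p f -> orbit_span n (factor_adj P p) (factor_adj P f).
Proof.
  intros [c Hc]. exists c. intros j.
  transitivity (factor_adj P (fun j => vsum (S n) (fun i => c i *v p (i + j)%nat)) j);
    [unfold factor_adj; rewrite !Hc; reflexivity |].
  rewrite factor_adj_orbit by exact HP. simpl.
  rewrite (peel_supp (n + j)%nat), vscal_c0, vadd_0 by lia. reflexivity.
Qed.

Lemma peel_lift f : orbit_span n (factor_adj P p) (factor_adj P f) -> orbit_span (S n) p f.
Proof.
  intros [c Hc].
  set (g := fun j => vsum n (fun i => c i *v p (i + j)%nat)).
  set (h := fun j => vsub (f j) (g j)).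
  assert (Hh : forall j, h j = monomial 0 (P (h 0%nat)) j).
  { apply factor_adj_kernel; [exact HP |]. intros j. unfold h.
    rewrite factor_adj_sub by exact HP. unfold g. rewrite factor_adj_orbit, <- Hc by exact HP.
    apply vsub_diag. }
  set (a := Cdiv (<< h 0%nat, p n >>) (<< p n, p n >>)).
  exists (fun i => if Nat.eqb i n then a else c i). intros j. simpl. rewrite Nat.eqb_refl.
  rewrite (vsum_ext n _ (fun i => c i *v p (i + j)%nat))
    by (intros i Hi; destruct (Nat.eqb_spec i n); [lia | reflexivity]).
  rewrite (vsub_add (f j) (g j)). fold (h j). rewrite Hh. f_equal.
  unfold monomial. destruct j as [|j]; simpl.
  - rewrite Nat.add_0_r. reflexivity.
  - rewrite Hsupp, vscal_c0 by lia. reflexivity.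
Qed.

Lemma peel_kernel0 y c :
  Pperp P y = c *v factor_adj P p (pred n) -> exists a, y = a *v p n.
Proof.
  intros Hc.
  assert (Hy : Pperp P y = 0v).
  { destruct (Nat.eq_dec n 0) as [Hn0 | Hn0].
    - rewrite Hc, (peel_supp (pred n)) by lia. apply vscal_c0.
    - assert (E : c *v p n = 0v)
        by (rewrite <- peel_top_image, <- (P_scal _ HP), <- Hc by lia; apply (P_Pp _ HP)).
      destruct (classic (c = C0)) as [-> | Hc0]; [rewrite Hc; apply vscal_0c |].
      exfalso. exact (Htop (vscal_eq0 _ _ E Hc0)). }
  exists (Cdiv (<< y, p n >>) (<< p n, p n >>)).
  transitivity (P y +v Pperp P y); [apply P_decomp | rewrite Hy, vadd_0; reflexivity].
Qed.

End Peel.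

Definition push_proj {X : Hilbert} (Ps : nat -> X -> X) (k : nat) (P : X -> X) : nat -> X -> X :=
  fun i => if Nat.eqb i k then P else Ps i.

Lemma theta_adj_proj_eq {X : Hilbert} (Ps Ps' : nat -> X -> X) n f :
  (forall i, (1 <= i <= n)%nat -> Ps i = Ps' i) -> theta_adj Ps n f = theta_adj Ps' n f.
Proof.
  revert f. induction n; intros f H; simpl; [reflexivity |].
  rewrite (H (S n)) by lia. apply IHn. intros; apply H; lia.
Qed.

Lemma theta0_star_proj_eq {X : Hilbert} (Ps Ps' : nat -> X -> X) n y :
  (forall i, (1 <= i <= n)%nat -> Ps i = Ps' i) -> theta0_star Ps n y = theta0_star Ps' n y.
Proof.
  revert y. induction n; intros y H; simpl; [reflexivity |].
  rewrite (H (S n)) by lia. apply IHn. intros; apply H; lia.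
Qed.

Lemma push_proj_below {X : Hilbert} (Ps : nat -> X -> X) n P :
  forall i, (1 <= i <= n)%nat -> push_proj Ps (S n) P i = Ps i.
Proof. intros i Hi. unfold push_proj. destruct (Nat.eqb_spec i (S n)); [lia | reflexivity]. Qed.

Lemma push_proj_top {X : Hilbert} (Ps : nat -> X -> X) n P : push_proj Ps (S n) P (S n) = P.
Proof. unfold push_proj. rewrite Nat.eqb_refl. reflexivity. Qed.

Theorem factorisation {X : Hilbert} n (p : nat -> X) :
  supp n p -> ((0 < n)%nat -> p (pred n) <> 0v) -> exists Ps, adapted n p Ps.
Proof.
  revert p. induction n as [|n IH]; intros p Hsupp Htop.
  - exists (fun _ x => x). split; [intros i Hi; lia |]. split; simpl.
    + intros f. split; [intros H; exists (fun _ => C0); exact H | intros [c Hc]; exact Hc].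
    + intros y ->. exists C0. symmetry. apply vscal_0c.
  - assert (Hu : p n <> 0v) by (apply Htop; lia).
    set (P := proj (p n)).
    destruct (IH (factor_adj P p) (peel_supp n p Hsupp Hu) (peel_top n p Hu))
      as [Ps' [HPs' [Hker' Hker0']]].
    exists (push_proj Ps' (S n) P). split; [| split].
    + intros i Hi. destruct (Nat.eq_dec i (S n)) as [-> |].
      * rewrite push_proj_top. apply proj_orth, Hu.
      * rewrite push_proj_below by lia. apply HPs'. lia.
    + intros f. simpl. rewrite push_proj_top, (theta_adj_proj_eq _ Ps')
        by apply push_proj_below.
      rewrite Hker'. split; [apply peel_lift; auto | apply peel_restrict; auto].
    + intros y Hy. simpl in Hy. rewrite push_proj_top, (theta0_star_proj_eq _ Ps') in Hy
        by apply push_proj_below.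
      destruct (Hker0' _ Hy) as [c Hc]. exact (peel_kernel0 n p Hsupp Hu y c Hc).
Qed.

Lemma span_orbit_orbit {X : Hilbert} n (p g : nat -> X) :
  supp n p -> span_orbit p g -> orbit_span n p g.
Proof.
  intros Hs [m [c Hc]].
  set (h := fun j i => (if Nat.ltb i m then c i else C0) *v p (i + j)%nat).
  exists (fun i => if Nat.ltb i m then c i else C0). intros j. rewrite Hc.
  transitivity (vsum (Nat.max m n) (h j)).
  - rewrite (vsum_extend m (Nat.max m n) (h j)).
    + apply vsum_ext. intros i Hi. unfold h. rewrite bshift_iter_eq.
      destruct (Nat.ltb_spec i m); [reflexivity | lia].
    + lia.
    + intros i Hi. unfold h. destruct (Nat.ltb_spec i m); [lia | apply vscal_0c].
  - apply vsum_extend; [lia |]. intros i Hi. unfold h. rewrite Hs by lia. apply vscal_c0.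
Qed.

Lemma orbit_E_span {X : Hilbert} n (p f : nat -> X) : in_H2 f -> orbit_span n p f -> E_span p f.
Proof.
  intros Hin [c Hc]. split; [exact Hin |]. intros eps He. exists f. split.
  - exists n, c. intros j. rewrite Hc. apply vsum_ext. intros i _. rewrite bshift_iter_eq. reflexivity.
  - intros m. rewrite sum_f_R0_Rsum, (Rsum_ext _ _ (fun _ => 0)).
    + rewrite (Rsum_extend 0 (S m)); simpl; [lra | lia | reflexivity].
    + intros i _. rewrite vsub_diag. apply norm2_zero.
Qed.

Lemma quad_expand {X : Hilbert} (x y : X) a :
  Re (<< x +v a *v y, x +v a *v y >>) =
  norm2 x + Re (Cmul (Cconj a) (<< x, y >>)) + Re (Cmul a (Cconj (<< x, y >>)))
  + Re (Cmul a (Cconj a)) * norm2 y.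
Proof.
  rewrite inner_add_l, inner_scal_l, !inner_add_r, !inner_scal_r, (inner_conj _ y x).
  unfold norm2. pose proof (inner_self_Im y). destruct (<< y, y >>) as [yr yi].
  simpl in *. subst yi. destruct a, (<< x, y >>), (<< x, x >>). simpl. ring.
Qed.

Lemma cs_re {X : Hilbert} (x y : X) r : 0 <= norm2 x + 2 * r * Re (<< x, y >>) + r * r * norm2 y.
Proof.
  pose proof (inner_pos _ (x +v mkC r 0 *v y)) as H. rewrite quad_expand in H.
  destruct (<< x, y >>). simpl in *. nra.
Qed.

Lemma cs_im {X : Hilbert} (x y : X) r : 0 <= norm2 x + 2 * r * Im (<< x, y >>) + r * r * norm2 y.
Proof.
  pose proof (inner_pos _ (x +v mkC 0 r *v y)) as H. rewrite quad_expand in H.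
  destruct (<< x, y >>). simpl in *. nra.
Qed.

Lemma real_zero (W A : R) : 0 <= A ->
  (forall eps, eps > 0 -> forall r, 0 <= eps + 2 * r * W + r * r * A) -> W = 0.
Proof.
  intros HA H. destruct (Req_dec W 0) as [| HW]; [auto | exfalso].
  assert (HW2 : 0 < W * W) by (apply Rsqr_pos_lt; auto).
  set (eps := W * W / (2 * (A + 1))).
  assert (He : eps > 0) by (unfold eps; apply Rdiv_lt_0_compat; lra).
  specialize (H eps He (- W / (A + 1))).
  replace (eps + 2 * (- W / (A + 1)) * W + (- W / (A + 1)) * (- W / (A + 1)) * A)
    with (W * W * (1/2 - 2 + A / (A + 1)) / (A + 1)) in H by (unfold eps; field; lra).
  assert (A / (A + 1) <= 1).
  { unfold Rdiv. apply (Rmult_le_reg_r (A + 1)); [lra |]. rewrite Rmult_assoc, Rinv_l by lra. lra. }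
  assert (W * W * (1 / 2 - 2 + A / (A + 1)) < 0) by nra.
  assert (W * W * (1 / 2 - 2 + A / (A + 1)) / (A + 1) < 0)
    by (unfold Rdiv; apply Rmult_neg_pos; auto; apply Rinv_0_lt_compat; lra).
  lra.
Qed.

(* Continuity of the inner product: a limit (over [0, n)) of vectors orthogonal
   to y is orthogonal to y. *)
Lemma approx_zero {X : Hilbert} n (f y : nat -> X) :
  (forall eps, eps > 0 -> exists g, Csum n (fun j => << g j, y j >>) = C0 /\
      Rsum n (fun j => norm2 (vsub (f j) (g j))) <= eps) ->
  Csum n (fun j => << f j, y j >>) = C0.
Proof.
  intros H.
  set (A := Rsum n (fun j => norm2 (y j))).
  assert (HA : 0 <= A) by (apply Rsum_nonneg; intros; apply norm2_nonneg).
  assert (Split : forall g : nat -> X, Csum n (fun j => << f j, y j >>) =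
     Cadd (Csum n (fun j => << g j, y j >>)) (Csum n (fun j => << vsub (f j) (g j), y j >>))).
  { intros g. rewrite <- Csum_add. apply Csum_ext. intros i _.
    rewrite (vsub_add (f i) (g i)) at 1. apply inner_add_l. }
  apply Ceq; simpl; apply (real_zero _ A HA); intros eps He r;
    destruct (H eps He) as [g [Hg Hd]]; rewrite (Split g), Hg; simpl;
    [rewrite Re_Csum | rewrite Im_Csum].
  - pose proof (Rsum_nonneg n _ (fun j _ => cs_re (vsub (f j) (g j)) (y j) r)) as Hn.
    rewrite !Rsum_add, !Rsum_scal in Hn. fold A in Hn. lra.
  - pose proof (Rsum_nonneg n _ (fun j _ => cs_im (vsub (f j) (g j)) (y j) r)) as Hn.
    rewrite !Rsum_add, !Rsum_scal in Hn. fold A in Hn. lra.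
Qed.

Lemma le_all_eps (a : R) : 0 <= a -> (forall eps, eps > 0 -> a <= eps) -> a = 0.
Proof. intros H0 H. destruct (Req_dec a 0); auto. specialize (H (a / 2) ltac:(lra)). lra. Qed.

Lemma E_span_supp {X : Hilbert} n (p f : nat -> X) : supp n p -> E_span p f -> supp n f.
Proof.
  intros Hsp [_ Happ] j Hj. apply norm2_0, le_all_eps; [apply norm2_nonneg |]. intros eps He.
  destruct (Happ eps He) as [g [Hg Hcl]].
  specialize (Hcl j). rewrite sum_f_R0_Rsum in Hcl.
  pose proof (Rsum_term (S j) (fun k => norm2 (vsub (f k) (g k))) j
                (fun i _ => norm2_nonneg _) ltac:(lia)) as Hterm.
  cbv beta in Hterm.
  rewrite (orbit_span_supp n p g Hsp (span_orbit_orbit n p g Hsp Hg) j Hj), vsub_0 in Hterm.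
  lra.
Qed.

Lemma E_span_orth {X : Hilbert} n (p : nat -> X) Ps f :
  supp n p -> adapted n p Ps -> E_span p f ->
  forall g, in_H2 g -> H2_orth f (theta_apply Ps n g).
Proof.
  intros Hsp [HPs [Hker _]] Hf g _.
  pose proof (E_span_supp n p f Hsp Hf) as Hfs. destruct Hf as [_ Happ].
  apply (H2_orth_fin _ _ n); [intros k Hk; rewrite Hfs by lia; apply inner_0_l |].
  apply approx_zero. intros eps He.
  destruct (Happ eps He) as [g' [Hg' Hcl]].
  pose proof (span_orbit_orbit n p g' Hsp Hg') as Horb.
  exists g'. split.
  - rewrite theta_adjoint by (auto; apply (orbit_span_supp n p); auto).
    apply Csum_zero. intros i _. rewrite (proj2 (Hker g') Horb). apply inner_0_l.
  - destruct n as [|m]; [simpl; lra |].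
    specialize (Hcl m). rewrite sum_f_R0_Rsum in Hcl. exact Hcl.
Qed.

Lemma fin_kernel_iff_orbit {X : Hilbert} n (p : nat -> X) Ps f :
  supp n p -> adapted n p Ps -> fin_kernel Ps n f <-> orbit_span n p f.
Proof.
  intros Hsp [_ [Hker _]]. unfold fin_kernel. rewrite Hker.
  split; [intros [_ H]; exact H | intros H; split; [apply (orbit_span_supp n p) |]; auto].
Qed.

(* The finite orbit span is closed: E_p = span {S^{*i} p : i < n}. *)
Lemma E_span_iff_orbit {X : Hilbert} n (p : nat -> X) Ps f :
  supp n p -> adapted n p Ps -> E_span p f <-> orbit_span n p f.
Proof.
  intros Hsp Had. split.
  - intros Hf. apply (fin_kernel_iff_orbit n p Ps f Hsp Had).
    apply (perp_range_iff Ps n f (proj1 Had)).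
    split; [apply Hf | apply (E_span_orth n p Ps f Hsp Had Hf)].
  - intros Hf. apply (orbit_E_span n); [apply (in_H2_supp n), (orbit_span_supp n p) |]; auto.
Qed.

Lemma orbit_indep {X : Hilbert} N (p : nat -> X) (c : nat -> C) : supp (S N) p -> p N <> 0v ->
  (forall j, vsum (S N) (fun i => c i *v p (i + j)%nat) = 0v) ->
  forall i, (i < S N)%nat -> c i = C0.
Proof.
  intros Hs Hn H.
  assert (Hk : forall k i, (i < k)%nat -> (i < S N)%nat -> c i = C0).
  { induction k; intros i Hi HiN; [lia |].
    destruct (Nat.eq_dec i k) as [-> |]; [| apply IHk; lia].
    specialize (H (N - k)%nat).
    rewrite (vsum_single _ _ k) in H; [| lia |].
    2:{ intros i Hi2 Hik. destruct (Nat.lt_ge_cases i k).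
        - rewrite IHk by lia. apply vscal_0c.
        - rewrite Hs by lia. apply vscal_c0. }
    replace (k + (N - k))%nat with N in H by lia.
    destruct (classic (c k = C0)) as [| Hc]; [auto |].
    exfalso. exact (Hn (vscal_eq0 _ _ H Hc)). }
  intros i Hi. apply (Hk (S i)); lia.
Qed.

(* Index i of [0, n) in the list [0, n] with i0 removed. *)
Definition skip (i0 i : nat) : nat := if Nat.ltb i i0 then i else S i.

Lemma Csum_skip n (h : nat -> C) i0 : (i0 <= n)%nat ->
  Csum (S n) h = Cadd (h i0) (Csum n (fun i => h (skip i0 i))).
Proof.
  induction n; intros Hi.
  - replace i0 with 0%nat by lia. simpl. ring.
  - change (Csum (S (S n)) h) with (Cadd (Csum (S n) h) (h (S n))).
    destruct (Nat.eq_dec i0 (S n)) as [-> |].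
    + rewrite (Csum_ext (S n) (fun i => h (skip (S n) i)) h); [ring |].
      intros i Hi'. unfold skip. destruct (Nat.ltb_spec i (S n)); [reflexivity | lia].
    + rewrite IHn by lia. cbn [Csum].
      replace (skip i0 n) with (S n)
        by (unfold skip; destruct (Nat.ltb_spec n i0); [lia | reflexivity]).
      ring.
Qed.

(* A homogeneous system of k linear equations sum_i c_i a_{i,l} = 0 (l < k) in
   m > k unknowns has a nontrivial solution (Gaussian elimination). *)
Lemma homogeneous_solution : forall k m (a : nat -> nat -> C), (k < m)%nat ->
  exists c : nat -> C, (exists i, (i < m)%nat /\ c i <> C0) /\
    forall l, (l < k)%nat -> Csum m (fun i => Cmul (c i) (a i l)) = C0.
Proof.
  induction k; intros m a Hkm.
  - exists (fun _ => C1). split; [exists 0%nat; split; [lia | apply C1_ne_C0] | intros; lia].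
  - destruct (classic (exists i0, (i0 < m)%nat /\ a i0 k <> C0)) as [[i0 [Hi0 Ha0]] | Hno].
    + (* eliminate the unknown i0 using equation k *)
      set (t := fun i => Cdiv (a (skip i0 i) k) (a i0 k)).
      set (a' := fun i l => Csub (a (skip i0 i) l) (Cmul (t i) (a i0 l))).
      destruct (IHk (m - 1)%nat a' ltac:(lia)) as [c' [[i1 [Hi1 Hc1]] Hc']].
      set (c := fun j => if Nat.eqb j i0 then Copp (Csum (m - 1) (fun i => Cmul (c' i) (t i)))
                         else c' (if Nat.ltb j i0 then j else (j - 1)%nat)).
      assert (Hcs : forall i, c (skip i0 i) = c' i).
      { intros i. unfold c, skip. destruct (Nat.ltb_spec i i0).
        - destruct (Nat.eqb_spec i i0); [lia |]. destruct (Nat.ltb_spec i i0); [reflexivity | lia].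
        - destruct (Nat.eqb_spec (S i) i0); [lia |]. destruct (Nat.ltb_spec (S i) i0); [lia |].
          f_equal. lia. }
      exists c. split.
      * exists (skip i0 i1). rewrite Hcs.
        split; [unfold skip; destruct (Nat.ltb_spec i1 i0); lia | exact Hc1].
      * intros l Hl. replace m with (S (m - 1)) by lia.
        rewrite (Csum_skip (m - 1) _ i0) by lia.
        rewrite (Csum_ext (m - 1) _ (fun i => Cmul (c' i) (a (skip i0 i) l)))
          by (intros; rewrite Hcs; reflexivity).
        assert (E : Csum (m - 1) (fun i => Cmul (c' i) (a' i l)) = C0).
        { destruct (Nat.eq_dec l k) as [-> |]; [| apply Hc'; lia].
          apply Csum_zero. intros i _. unfold a', t. field. exact Ha0. }
        unfold a' in E. rewrite Csum_lin_sub in E.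
        unfold c at 1. rewrite Nat.eqb_refl, <- E. ring.
    + (* equation k is trivial *)
      destruct (IHk m a ltac:(lia)) as [c [Hnz Hc]]. exists c. split; [exact Hnz |].
      intros l Hl. destruct (Nat.eq_dec l k) as [-> |]; [| apply Hc; lia].
      apply Csum_zero. intros i Hi.
      destruct (classic (a i k = C0)) as [-> | E]; [ring | exfalso; apply Hno; eauto].
Qed.

Lemma span_dim_bound {X : Hilbert} (G : (nat -> X) -> Prop) n m (p : nat -> X) :
  H2_dim G n -> (forall f, G f -> orbit_span m p f) -> (n <= m)%nat.
Proof.
  intros [e [He [Hind _]]] Hsp. apply Nat.nlt_ge. intros Hmn.
  assert (Hex : forall i, exists ai : nat -> C, (i < n)%nat ->
             forall j, e i j = vsum m (fun l => ai l *v p (l + j)%nat)).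
  { intros i. destruct (Nat.lt_ge_cases i n) as [Hi | Hi].
    - destruct (Hsp (e i) (He i Hi)) as [ai Hai]. exists ai. intros _. exact Hai.
    - exists (fun _ => C0). intros; lia. }
  destruct (choice _ Hex) as [A HA].
  destruct (homogeneous_solution m n A Hmn) as [c [[i1 [Hi1 Hc1]] Hc]].
  apply Hc1. apply (Hind c); [| exact Hi1]. intros j.
  rewrite (vsum_ext n _ (fun i => c i *v vsum m (fun l => A i l *v p (l + j)%nat)))
    by (intros i Hi; rewrite HA by exact Hi; reflexivity).
  rewrite vsum_exchange. apply vsum_zero. intros l Hl. rewrite Hc by exact Hl. apply vscal_0c.
Qed.

Lemma orbit_dim {X : Hilbert} N (p : nat -> X) (G : (nat -> X) -> Prop) :
  supp (S N) p -> p N <> 0v -> (forall f, G f <-> orbit_span (S N) p f) -> H2_dim G (S N).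
Proof.
  intros Hsp HpN HG. exists (fun i => bshift_iter i p). split; [| split].
  - intros i Hi. apply HG. exists (fun l => if Nat.eqb l i then C1 else C0). intros j.
    rewrite bshift_iter_eq, (vsum_single _ _ i) by
      (first [lia | intros l Hl Hli; destruct (Nat.eqb_spec l i); [lia | apply vscal_0c]]).
    rewrite Nat.eqb_refl, vscal_1. reflexivity.
  - intros c Hc. apply (orbit_indep N p c Hsp HpN). intros j. rewrite <- (Hc j).
    apply vsum_ext. intros i _. rewrite bshift_iter_eq. reflexivity.
  - intros f Hf. destruct (proj1 (HG f) Hf) as [c Hc]. exists c. intros j.
    rewrite Hc. apply vsum_ext. intros i _. rewrite bshift_iter_eq. reflexivity.
Qed.

Lemma kernel0_dim {X : Hilbert} N (p : nat -> X) Ps :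
  supp (S N) p -> p N <> 0v -> adapted (S N) p Ps -> X_dim (ker_adj (theta0 Ps (S N))) 1.
Proof.
  intros Hsp HpN [HPs [Hker Hker0]].
  assert (Htop : orbit_span (S N) p (monomial 0 (p N))).
  { exists (fun l => if Nat.eqb l N then C1 else C0). intros j.
    rewrite (vsum_single _ _ N) by
      (first [lia | intros l Hl Hli; destruct (Nat.eqb_spec l N); [lia | apply vscal_0c]]).
    rewrite Nat.eqb_refl, vscal_1. unfold monomial.
    destruct j; simpl; [rewrite Nat.add_0_r | symmetry; apply Hsp; lia]; reflexivity. }
  exists (fun _ => p N). split; [| split].
  - intros i Hi. apply ker_adj_iff, theta_adj_const_iff, Hker; auto.
  - intros c Hc i Hi. replace i with 0%nat by lia. simpl in Hc. rewrite vadd_0l in Hc.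
    destruct (classic (c 0%nat = C0)) as [| Hc0]; [auto |].
    exfalso. exact (HpN (vscal_eq0 _ _ Hc Hc0)).
  - intros y Hy. apply ker_adj_iff in Hy; [| exact HPs].
    destruct (Hker0 y Hy) as [c Hc]. exists (fun _ => c). simpl. rewrite vadd_0l. exact Hc.
Qed.

Lemma poly_implies_factorisation {X : Hilbert} N (F : (nat -> X) -> Prop) (p : nat -> X) :
  is_poly_deg p N -> (forall f, F f <-> E_span p f) ->
  H2_dim F (S N) /\
  exists Ps : nat -> X -> X,
    (forall i, (1 <= i <= S N)%nat -> orth_proj (Ps i)) /\
    (forall f, F f <-> (in_H2 f /\ forall g, in_H2 g -> H2_orth f (theta_apply Ps (S N) g))) /\
    X_dim (ker_adj (theta0 Ps (S N))) 1.
Proof.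
  intros [HpN Hpz] HFp.
  assert (Hsp : supp (S N) p) by (intros j Hj; apply Hpz; lia).
  destruct (factorisation (S N) p Hsp (fun _ => HpN)) as [Ps Had].
  assert (HFo : forall f, F f <-> orbit_span (S N) p f)
    by (intros f; rewrite HFp; apply (E_span_iff_orbit _ _ Ps); auto).
  split; [exact (orbit_dim N p F Hsp HpN HFo) |].
  exists Ps. split; [exact (proj1 Had) | split; [| exact (kernel0_dim N p Ps Hsp HpN Had)]].
  intros f. rewrite HFo, (perp_range_iff _ _ _ (proj1 Had)).
  symmetry. apply (fin_kernel_iff_orbit _ _ _ _ Hsp Had).
Qed.

Lemma fin_kernel_bshift {X : Hilbert} (Ps : nat -> X -> X) n f :
  fin_kernel Ps n f -> fin_kernel Ps n (bshift f).
Proof.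
  intros [Hs Ht]. split; [intros j Hj; apply Hs; lia |].
  intros j. rewrite theta_adj_bshift. apply Ht.
Qed.

Lemma ker_line {X : Hilbert} (Ps : nat -> X -> X) n : orthP Ps n ->
  X_dim (ker_adj (theta0 Ps n)) 1 ->
  exists u, u <> 0v /\ forall y, theta0_star Ps n y = 0v -> exists a, y = a *v u.
Proof.
  intros HPs [e [_ [Hind Hspan]]]. exists (e 0%nat). split.
  - intros E. apply C1_ne_C0. apply (Hind (fun _ => C1) ltac:(simpl; rewrite E, vscal_c0;
      apply vadd_0) 0%nat). lia.
  - intros y Hy. destruct (Hspan y (proj2 (ker_adj_iff Ps n y HPs) Hy)) as [c Hc].
    exists (c 0%nat). rewrite Hc. simpl. apply vadd_0l.
Qed.

Lemma max_witness (Q : nat -> Prop) B : (exists k, Q k) -> (forall k, Q k -> (k < B)%nat) ->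
  exists k, Q k /\ forall j, Q j -> (j <= k)%nat.
Proof.
  induction B; intros [k Hk] HB; [specialize (HB k Hk); lia |].
  destruct (classic (Q B)) as [HQ | HQ].
  - exists B. split; [exact HQ |]. intros j Hj. specialize (HB j Hj). lia.
  - apply IHB; [exists k; exact Hk |]. intros j Hj. specialize (HB j Hj).
    destruct (Nat.eq_dec j B) as [-> |]; [contradiction | lia].
Qed.

Lemma max_degree_element {X : Hilbert} N (G : (nat -> X) -> Prop) :
  H2_dim G (S N) -> (forall f, G f -> supp (S N) f) ->
  exists k p, G p /\ p k <> 0v /\ forall f, G f -> supp (S k) f.
Proof.
  intros [e [He [Hind _]]] Hsupp.
  set (Q := fun k => exists f, G f /\ f k <> 0v).
  assert (HQex : exists k, Q k).
  { apply NNPP. intros Hno. apply C1_ne_C0.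
    apply (Hind (fun i => if Nat.eqb i 0 then C1 else C0)) with (i := 0%nat); [| lia].
    intros j. apply vsum_zero. intros i Hi. destruct (Nat.eqb_spec i 0) as [-> |].
    - replace (e 0%nat j) with (0v : X); [apply vscal_c0 |].
      apply NNPP. intros Hj. apply Hno. exists j, (e 0%nat). split; [apply He; lia | auto].
    - apply vscal_0c. }
  assert (HQb : forall k, Q k -> (k < S N)%nat).
  { intros k [f [Hf Hk]]. apply Nat.nle_gt. intros Hle. exact (Hk (Hsupp f Hf k Hle)). }
  destruct (max_witness Q (S N) HQex HQb) as [k [[p [Gp Hpk]] Hmax]].
  exists k, p. split; [exact Gp | split; [exact Hpk |]].
  intros f Hf j Hj. apply NNPP. intros Hfj. specialize (Hmax j (ex_intro _ f (conj Hf Hfj))). lia.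
Qed.

Lemma bshift_iter_invariant {X : Hilbert} (G : (nat -> X) -> Prop) :
  (forall f, G f -> G (bshift f)) -> forall i f, G f -> G (bshift_iter i f).
Proof. intros Gshift i. induction i; intros f Hf; simpl; auto. Qed.

(* Induction on the degree: subtracting a
   multiple of S^{*(k-d)} p kills the top coefficient of f. *)
Lemma invariant_orbit_span {X : Hilbert} (G : (nat -> X) -> Prop) k (p : nat -> X) :
  (forall f g, G f -> G g -> G (fun j => f j +v g j)) ->
  (forall a f, G f -> G (fun j => a *v f j)) ->
  (forall f, G f -> G (bshift f)) ->
  G p -> (forall f, G f -> supp (S k) f) ->
  (forall y, G (monomial 0 y) -> exists a, y = a *v p k) ->
  forall f, G f -> orbit_span (S k) p f.
Proof.
  intros Gadd Gscal Gshift Gp Gdeg Gconst.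
  pose proof (bshift_iter_invariant G Gshift) as Giter.
  assert (Hrep : forall d, (d <= S k)%nat -> forall f, G f -> supp d f -> orbit_span (S k) p f).
  { induction d as [|d IH]; intros Hd f Hf Hs.
    - exists (fun _ => C0). intros j. rewrite Hs by lia.
      symmetry. apply vsum_zero. intros; apply vscal_0c.
    - destruct (Gconst (f d)) as [a Ha].
      { rewrite <- bshift_iter_top by exact Hs. apply Giter, Hf. }
      set (q := bshift_iter (k - d) p).
      set (f' := fun j => f j +v (Copp a *v q j)).
      assert (Hs' : supp d f').
      { intros j Hj. unfold f', q. rewrite bshift_iter_eq.
        destruct (Nat.eq_dec j d) as [-> | Hjd].
        - replace (k - d + d)%nat with k by lia. rewrite Ha, <- vscal_distr_c.
          replace (Cadd a (Copp a)) with C0 by ring. apply vscal_0c.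
        - rewrite Hs, (Gdeg p Gp), vscal_c0 by lia. apply vadd_0. }
      destruct (IH ltac:(lia) f' (Gadd _ _ Hf (Gscal _ _ (Giter _ _ Gp))) Hs') as [c Hc].
      exists (fun i => if Nat.eqb i (k - d) then Cadd (c i) a else c i). intros j.
      rewrite <- vsum_update, <- Hc by lia. unfold f', q. rewrite bshift_iter_eq.
      rewrite <- vadd_assoc, <- vscal_distr_c. replace (Cadd (Copp a) a) with C0 by ring.
      rewrite vscal_0c, vadd_0. reflexivity. }
  intros f Hf. apply (Hrep (S k)); auto.
Qed.

Lemma closed_subspace_vsum {X : Hilbert} (F : (nat -> X) -> Prop) m (c : nat -> C)
  (x : nat -> nat -> X) : closed_subspace F ->
  (forall i, (i < m)%nat -> F (x i)) -> F (fun j => vsum m (fun i => c i *v x i j)).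
Proof.
  intros [_ [H0 [Hadd [Hscal _]]]].
  induction m; intros H; simpl; [exact H0 |].
  apply (Hadd (fun j => vsum m (fun i => c i *v x i j)) (fun j => c m *v x m j));
    [apply IHm; intros; apply H; lia | apply Hscal, H; lia].
Qed.

Lemma E_span_closed {X : Hilbert} (F : (nat -> X) -> Prop) (p f : nat -> X) :
  closed_subspace F -> (forall i, F (bshift_iter i p)) -> E_span p f -> F f.
Proof.
  intros HF Hp [Hin Happ].
  assert (Hex : forall k : nat, exists g, span_orbit p g /\ H2_close f g (/ INR (S k)))
    by (intros k; apply Happ, Rinv_0_lt_compat, lt_0_INR; lia).
  destruct (choice _ Hex) as [U HU].
  apply (proj2 (proj2 (proj2 (proj2 HF))) U); [| exact Hin |].
  - intros k. destruct (HU k) as [[m [c Hc]] _].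
    replace (U k) with (fun j => vsum m (fun i => c i *v bshift_iter i p j))
      by (apply functional_extensionality; intros j; symmetry; apply Hc).
    apply closed_subspace_vsum; auto.
  - intros eps He. destruct (INR_unbounded (/ eps)) as [K HK].
    exists K. intros k Hk m. destruct (HU k) as [_ Hcl]. specialize (Hcl m).
    rewrite sum_f_R0_Rsum in *.
    rewrite (Rsum_ext _ _ (fun j => norm2 (vsub (f j) (U k j)))) by (intros; apply norm2_vsub_sym).
    assert (/ INR (S k) <= eps).
    { assert (INR K <= INR (S k)) by (apply le_INR; lia).
      assert (0 < / eps) by (apply Rinv_0_lt_compat; lra).
      rewrite <- (Rinv_inv eps). apply Rinv_le_contravar; lra. }
    lra.
Qed.

Lemma factorisation_implies_poly {X : Hilbert} N (F : (nat -> X) -> Prop) Ps :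
  closed_subspace F -> H2_dim F (S N) -> orthP Ps (S N) ->
  (forall f, F f <-> (in_H2 f /\ forall g, in_H2 g -> H2_orth f (theta_apply Ps (S N) g))) ->
  X_dim (ker_adj (theta0 Ps (S N))) 1 ->
  exists p : nat -> X, is_poly_deg p N /\ (forall f, F f <-> E_span p f).
Proof.
  intros HF Hdim HPs Hiff Hker.
  assert (HG : forall f, F f <-> fin_kernel Ps (S N) f)
    by (intros f; rewrite Hiff; apply perp_range_iff, HPs).
  assert (Fshift : forall f, F f -> F (bshift f))
    by (intros f Hf; apply HG, fin_kernel_bshift, HG, Hf).
  assert (Fconst : forall y, F (monomial 0 y) -> theta0_star Ps (S N) y = 0v)
    by (intros y Hy; apply (theta_adj_const_iff _ _ _ HPs), (proj2 (proj1 (HG _) Hy))).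
  destruct (ker_line Ps (S N) HPs Hker) as [u [Hu Hline]].
  destruct (max_degree_element N F Hdim (fun f Hf => proj1 (proj1 (HG f) Hf)))
    as [k [p [Fp [Hpk Hdeg]]]].
  destruct (Hline (p k)) as [b Hb].
  { apply Fconst. rewrite <- bshift_iter_top by (apply Hdeg, Fp).
    apply bshift_iter_invariant; auto. }
  assert (Hb0 : b <> C0) by (intros ->; apply Hpk; rewrite Hb; apply vscal_0c).
  pose proof HF as (Hin & _ & Fadd & Fscal & _).
  assert (HSp : forall f, F f -> orbit_span (S k) p f).
  { apply invariant_orbit_span; auto. intros y Hy. destruct (Hline y (Fconst y Hy)) as [a Ha].
    exists (Cdiv a b). rewrite Ha, Hb, vscal_assoc. f_equal. field. exact Hb0. }
  assert (HkN : k = N).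
  { pose proof (span_dim_bound F (S N) (S k) p Hdim HSp).
    assert (~ (S N <= k)%nat) by (intros Hle; apply Hpk, (proj1 (proj1 (HG p) Fp)), Hle). lia. }
  subst k. exists p. split; [split; [exact Hpk | intros j Hj; apply (Hdeg p Fp); lia] |].
  intros f. split; [intros Hf; apply (orbit_E_span (S N)); auto |].
  apply E_span_closed; [exact HF |]. intros i. apply bshift_iter_invariant; auto.
Qed.

Close Scope R_scope.

Theorem mainTheorem7 (X : Hilbert) (HX : separable X) (N : nat)
  (F : (nat -> X) -> Prop) (HF : closed_subspace F) :
  (exists p : nat -> X, is_poly_deg p N /\ (forall f, F f <-> E_span p f)) <->
  (H2_dim F (S N) /\
   exists Ps : nat -> X -> X,
     (forall i, (1 <= i <= S N)%nat -> orth_proj (Ps i)) /\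
     (forall f, F f <->
        (in_H2 f /\ forall g, in_H2 g -> H2_orth f (theta_apply Ps (S N) g))) /\
     X_dim (ker_adj (theta0 Ps (S N))) 1).
Proof.
  split.
  - intros [p [Hdeg HFp]]. exact (poly_implies_factorisation N F p Hdeg HFp).
  - intros [Hdim [Ps [HPs [Hiff Hker]]]].
    exact (factorisation_implies_poly N F Ps HF Hdim HPs Hiff Hker).
Qed.
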